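(* A connected subcubic graph $G$ satisfies $2\alpha(G)=\mathrm{diss}(G)$ if and only if $G\in\mathcal{G}$.
   Context: All graphs are finite, simple and undirected; subcubic means maximum degree at most $3$. $\alpha(G)$ is the independence number. A set $D$ of vertices is a dissociation set if $G[D]$ has maximum degree at most $1$, and $\mathrm{diss}(G)$ is the maximum order of a dissociation set. Let $K_4^*$ be the graph obtained from $K_4$ with vertices $a,b,c,d$ by subdividing the edge $ab$ twice (i.e. replacing $ab$ by a path $a\,x\,y\,b$ with two new vertices $x,y$). The class $\mathcal{G}$ consists of $K_4$ together with all connected subcubic graphs obtained as follows: take the disjoint union of (at least one, finitely many) copies of the following three marked graphs: (1) $K_2$ with both vertices marked; (2) $K_3$ with exactly two of its three vertices marked; (3) $K_4^*$ with the two subdivision vertices $x,y$ and the vertices $c,d$ marked (so $a,b$ are unmarked); then add additional edges between vertices of the union, each added edge being incident with at most one marked vertex, such that the resulting graph is simple, connected and subcubic. *)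

From mathcomp Require Import all_boot.
Set Implicit Arguments. Unset Strict Implicit. Unset Printing Implicit Defensive.

Section Graphs.
Variable T : finType.
Implicit Types (e h : rel T) (S M C : {set T}).

Definition simple_graph e := symmetric e /\ irreflexive e.

Definition connected_graph e := 0 < #|T| /\ forall x y : T, connect e x y.

Definition subcubic e := forall x : T, #|[set y | e x y]| <= 3.

Definition independent e S := [forall x in S, forall y in S, ~~ e x y].

Definition dissociation e S := [forall x in S, #|[set y in S | e x y]| <= 1].

Definition alpha e : nat := \max_(S : {set T} | independent e S) #|S|.
Definition diss e : nat := \max_(S : {set T} | dissociation e S) #|S|.

Definition marked_copy n (adj : rel 'I_n) (mk : pred 'I_n) h M C :=
  exists phi : 'I_n -> T,
    [/\ injective phi, C = phi @: [set: 'I_n],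
        forall i j, h (phi i) (phi j) = adj i j
      & forall i, (phi i \in M) = mk i].

End Graphs.

Definition K2_adj : rel 'I_2 := fun i j => i != j.
Definition K2_mark : pred 'I_2 := fun _ => true.
Definition K3_adj : rel 'I_3 := fun i j => i != j.
Definition K3_mark : pred 'I_3 := fun i => val i != 2.
(* K4^*: a=0, b=1, c=2, d=3, x=4, y=5; edges ac ad bc bd cd ax xy yb;
   marked: c d x y *)
Definition K4s_edges : seq (nat * nat) :=
  [:: (0,2); (0,3); (1,2); (1,3); (2,3); (0,4); (4,5); (5,1)].
Definition K4s_adj : rel 'I_6 := fun i j =>
  ((val i, val j) \in K4s_edges) || ((val j, val i) \in K4s_edges).
Definition K4s_mark : pred 'I_6 := fun i => 2 <= val i.

Definition isK4 (T : finType) (e : rel T) :=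
  exists phi : 'I_4 -> T, bijective phi /\ forall i j, e (phi i) (phi j) = (i != j).

(* G is obtained from a disjoint union H (spanning subgraph h of e) of marked
   copies by adding edges (those of e not in h) each incident with at most one
   marked vertex. *)
Definition built_from_copies (T : finType) (e : rel T) :=
  exists (h : rel T) (M : {set T}),
    [/\ symmetric h,
        forall x y, h x y -> e x y,
        forall x : T, let C := [set y | connect h x y] in
          [\/ marked_copy K2_adj K2_mark h M C,
              marked_copy K3_adj K3_mark h M C
            | marked_copy K4s_adj K4s_mark h M C]
      & forall x y, e x y -> ~~ h x y -> ~~ ((x \in M) && (y \in M))].

Definition classG (T : finType) (e : rel T) := isK4 e \/ built_from_copies e.

(* Let D be a maximum dissociation set with |D| = 2 alpha(G).  Choosing, on each
   component of G[D] outside a mate-closed set Z, one end with no neighbour in an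
   independent set X outside D gives an independent set; counting shows that if
   |Z| < 2|X| then X is adjacent to both ends of some edge of G[D] outside Z.  For
   X = Z = {} this says that G[D] is a perfect matching; for small X it says that
   every vertex outside D is an apex (adjacent to both ends) of a matching edge, that
   two apexes of one edge are adjacent (and then G = K4) or together with a second
   edge span a copy of K4* whose subdivision edge has no apex.  Grouping the
   vertices by the matching edge at the centre of their copy of K2, K3 or K4* yields
   the decomposition of the class G, with D as the marked vertices.  Conversely the
   marked vertices of a graph of the class form a dissociation set, and an
   independent set contains at most half of the marked vertices of each copy. *)

From mathcomp Require Import all_boot zify.

Set Implicit Arguments.
Unset Strict Implicit.
Unset Printing Implicit Defensive.

Definition marks_dissociation n (adj : rel 'I_n) (mk : pred 'I_n) :=
  forall i j k, mk i -> mk j -> mk k -> adj i j -> adj i k -> j = k.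

Lemma K2_marks_dissociation : marks_dissociation K2_adj K2_mark.
Proof.
by do 3![case=> [[|[|?]] ?]] => //= *; apply: val_inj.
Qed.

Lemma K3_marks_dissociation : marks_dissociation K3_adj K3_mark.
Proof.
by do 3![case=> [[|[|[|?]]] ?]] => //= *; apply: val_inj.
Qed.

Lemma K4s_marks_dissociation : marks_dissociation K4s_adj K4s_mark.
Proof.
by do 3![case=> [[|[|[|[|[|[|?]]]]]] ?]] => //= *; apply: val_inj.
Qed.

Lemma complete_connect n (adj : rel 'I_n) :
  (forall i j, i != j -> adj i j) -> forall i j, connect adj i j.
Proof.
by move=> hadj i j; case: (eqVneq i j) => [->|/hadj/connect1].
Qed.

Lemma K4s_adj_sym : symmetric K4s_adj.
Proof. by move=> i j; rewrite /K4s_adj orbC. Qed.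

Lemma K4s_connect (i j : 'I_6) : connect K4s_adj i j.
Proof.
suff from0 k : connect K4s_adj ord0 k.
  by apply: connect_trans (from0 j); rewrite (sym_connect_sym K4s_adj_sym).
have c02 : connect K4s_adj ord0 (@Ordinal 6 2 isT) by apply: connect1.
have c04 : connect K4s_adj ord0 (@Ordinal 6 4 isT) by apply: connect1.
case: k => [[|[|[|[|[|[|k]]]]]] lt] //.
- by apply: eq_connect0; apply: val_inj.
- by apply: connect_trans c02 (connect1 _).
- by apply: connect1.
- by apply: connect1.
- by apply: connect1.
- by apply: connect_trans c04 (connect1 _).
Qed.

Lemma complete_indep_card (T : finType) (adj : rel T) (J : {set T}) :
  (forall i j, i != j -> adj i j) -> independent adj J -> #|J| <= 1.
Proof.
move=> hadj /forall_inP indJ; apply/card_le1_eqP => i j iJ jJ.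
have /forall_inP/(_ j jJ) := indJ i iJ.
by apply: contraNeq; rewrite eq_sym => /hadj.
Qed.

Lemma K4s_indep_card (J : {set 'I_6}) : independent K4s_adj J -> #|J| <= 2.
Proof.
move=> /forall_inP indJ; rewrite leqNgt.
apply/card_gt2P => -[i [j [k [[iJ jJ kJ] [ij jk ki]]]]].
have nadj u v : u \in J -> v \in J -> K4s_adj u v = false.
  by move=> uJ vJ; have /forall_inP/(_ v vJ)/negbTE := indJ u uJ.
move: (nadj i j iJ jJ) (nadj j k jJ kJ) (nadj k i kJ iJ) ij jk ki.
by case: i {iJ} => [[|[|[|[|[|[|i]]]]]] ?]; case: j {jJ} => [[|[|[|[|[|[|j]]]]]] ?];
   case: k {kJ} => [[|[|[|[|[|[|k]]]]]] ?].
Qed.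

Lemma card_K2_mark : #|[set i | K2_mark i]| = 2.
Proof. by rewrite cardsE -sum1_card big_mkcond /= !big_ord_recr big_ord0. Qed.

Lemma card_K3_mark : #|[set i | K3_mark i]| = 2.
Proof. by rewrite cardsE -sum1_card big_mkcond /= !big_ord_recr big_ord0. Qed.

Lemma card_K4s_mark : #|[set i | K4s_mark i]| = 4.
Proof. by rewrite cardsE -sum1_card big_mkcond /= !big_ord_recr big_ord0. Qed.

Lemma mem_codom_nth (T : eqType) n (s : seq T) z0 z :
  size s = n -> z \in s -> z \in codom (fun i : 'I_n => nth z0 s i).
Proof.
move=> sz zs; apply/codomP.
have lt : index z s < n by rewrite -sz index_mem.
by exists (Ordinal lt); rewrite /= nth_index.
Qed.

Lemma nth_ord_inj (T : eqType) n (s : seq T) z0 :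
  size s = n -> uniq s -> injective (fun i : 'I_n => nth z0 s i).
Proof.
by move=> sz us i j /eqP; rewrite nth_uniq ?sz ?ltn_ord // => /eqP; apply: val_inj.
Qed.

Section Graph.
Variable T : finType.
Variable e : rel T.
Implicit Types (S D I M C : {set T}) (h : rel T).

Lemma independentP S :
  reflect (forall x y, x \in S -> y \in S -> ~~ e x y) (independent e S).
Proof.
apply: (iffP forall_inP) => [indS x y xS yS | indS x xS].
  by have /forall_inP := indS x xS; apply.
by apply/forall_inP => y; apply: indS.
Qed.

Lemma dissociation_nbr_uniq S : dissociation e S ->
  forall x y z, x \in S -> y \in S -> z \in S -> e x y -> e x z -> y = z.
Proof.
move=> /forall_inP dS x y z xS yS zS exy exz.
by have /card_le1_eqP := dS x xS; apply; rewrite inE ?yS ?zS.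
Qed.

Lemma leq_card_alpha S : independent e S -> #|S| <= alpha e.
Proof. exact: leq_bigmax_cond. Qed.

Lemma leq_card_diss S : dissociation e S -> #|S| <= diss e.
Proof. exact: leq_bigmax_cond. Qed.

Lemma alpha_witness : exists2 I, independent e I & #|I| = alpha e.
Proof.
have : #|[pred S : {set T} | independent e S]| > 0.
  by apply/card_gt0P; exists set0; rewrite inE; apply/forall_inP => x; rewrite inE.
by case/(eq_bigmax_cond (fun S : {set T} => #|S|)) => S; rewrite inE; exists S.
Qed.

Lemma diss_witness : exists2 D, dissociation e D & #|D| = diss e.
Proof.
have : #|[pred S : {set T} | dissociation e S]| > 0.
  by apply/card_gt0P; exists set0; rewrite inE; apply/forall_inP => x; rewrite inE.
by case/(eq_bigmax_cond (fun S : {set T} => #|S|)) => S; rewrite inE; exists S.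
Qed.

Lemma connect_image h n (adj : rel 'I_n) (phi : 'I_n -> T) :
  (forall i j, adj i j -> h (phi i) (phi j)) ->
  forall i j, connect adj i j -> connect h (phi i) (phi j).
Proof.
move=> hom i j /connectP[q]; elim: q i => [|k q IHq] i /=; first by move=> _ ->.
by case/andP => aik pq lastq; apply: connect_trans (connect1 (hom _ _ aik)) (IHq _ pq lastq).
Qed.

Lemma marked_copy_dissociation n (adj : rel 'I_n) (mk : pred 'I_n) h M C :
  marks_dissociation adj mk -> marked_copy adj mk h M C ->
  forall x y z, x \in C -> y \in C -> z \in C ->
  x \in M -> y \in M -> z \in M -> h x y -> h x z -> y = z.
Proof.
move=> mkD [phi [_ -> hphi mphi]] x y z /imsetP[i _ ->] /imsetP[j _ ->] /imsetP[k _ ->].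
by rewrite !mphi !hphi => mi mj mk' aij aik; congr phi; exact: mkD mi mj mk' aij aik.
Qed.

Lemma marked_copy_indep n (adj : rel 'I_n) (mk : pred 'I_n) h M C I :
  (forall J : {set 'I_n}, independent adj J -> 2 * #|J| <= #|[set i | mk i]|) ->
  subrel h e -> independent e I -> marked_copy adj mk h M C ->
  2 * #|I :&: C| <= #|M :&: C|.
Proof.
move=> bound he /independentP indI [phi [phi_inj -> hphi mphi]].
have pullback A : A :&: phi @: [set: 'I_n] = phi @: [set i | phi i \in A].
  apply/setP => x; apply/setIP/imsetP => [[xA /imsetP[i _ xi]]|[i]].
    by exists i; rewrite // inE -xi.
  by rewrite inE => iA ->; split; last exact: imset_f.
rewrite !pullback !card_imset // (eq_finset _ mphi).
apply: bound; apply/forall_inP => i; rewrite inE => iI.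
apply/forall_inP => j; rewrite inE => jI.
by apply: contra (indI _ _ iI jI); rewrite -hphi; apply: he.
Qed.

Lemma dissociation_pair x y : irreflexive e -> dissociation e [set x; y].
Proof.
move=> e_irr; apply/forall_inP => u; rewrite !inE => uxy; apply/card_le1_eqP => v w.
rewrite !inE => /andP[vxy euv] /andP[wxy euw].
have neq z : e u z -> z != u by move=> euz; apply: contraTneq euz => ->; rewrite e_irr.
move: uxy vxy wxy (neq v euv) (neq w euw).
by do 3!case/orP=> /eqP->; rewrite ?eqxx.
Qed.

Lemma card_connect_partition h (A : {set T}) : connect_sym h ->
  #|A| = \sum_(r | root h r == r) #|A :&: [set v | connect h r v]|.
Proof.
move=> h_sym; rewrite -sum1_card (partition_big (root h) (fun r => root h r == r)) /=.
  apply: eq_bigr => r /eqP rr; rewrite -sum1_card; apply: eq_bigl => x; rewrite !inE.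
  by rewrite -{1}rr root_connect // h_sym.
by move=> x _; rewrite root_root.
Qed.

Section Subcubic.
Hypothesis e_cub : subcubic e.

Lemma uniq_nbrs_size v (s : seq T) : uniq s -> all (e v) s -> size s <= 3.
Proof.
move=> s_uniq s_nbrs; rewrite -(card_uniqP s_uniq); apply: leq_trans (e_cub v).
by apply/subset_leq_card/subsetP => y /(allP s_nbrs); rewrite inE.
Qed.

Lemma no_four_nbrs v a b c d : e v a -> e v b -> e v c -> e v d ->
  uniq [:: a; b; c; d] -> False.
Proof.
by move=> ea eb ec ed /(@uniq_nbrs_size v); rewrite /= ea eb ec ed => /(_ isT).
Qed.

Lemma three_nbrs v a b c z : e v a -> e v b -> e v c -> uniq [:: a; b; c] ->
  e v z -> [|| z == a, z == b | z == c].
Proof.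
move=> ea eb ec abc ez; apply: contraT; rewrite !negb_or => /and3P[za zb zc].
case: (no_four_nbrs ea eb ec ez); move: abc; rewrite /= !inE !negb_or !andbT.
by case/andP=> /andP[-> ->] ->; rewrite !(eq_sym _ z) za zb zc.
Qed.

Lemma clique4_closed (s : seq T) z y : size s = 4 -> uniq s ->
  {in s &, forall p q, p != q -> e p q} -> z \in s -> e z y -> y \in s.
Proof.
move=> s_size s_uniq s_clique zs ezy; apply: contraT => ys.
have := @uniq_nbrs_size z (y :: rem z s); rewrite /= size_rem // s_size ltnn; apply.
  by rewrite rem_uniq // andbT; apply: contra ys => /mem_rem.
rewrite ezy; apply/allP => p; rewrite (mem_rem_uniq _ s_uniq) inE => /andP[pz ps].
by rewrite s_clique // eq_sym.
Qed.

Lemma clique4_isK4 (s : seq T) : symmetric e -> irreflexive e ->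
  (forall x y, connect e x y) -> size s = 4 -> uniq s ->
  {in s &, forall p q, p != q -> e p q} -> isK4 e.
Proof.
case: s => [|z0 s] // e_sym e_irr conn s_size s_uniq s_clique.
have s_all y : y \in z0 :: s.
  have s_closed : closed e (mem (z0 :: s)).
    apply: (intro_closed (sym_connect_sym e_sym)) => x z exz xs.
    exact: clique4_closed s_uniq s_clique xs exz.
  by rewrite -(closed_connect s_closed (conn z0 y)) inE eqxx.
have s_adj (i j : 'I_4) : e (nth z0 (z0 :: s) i) (nth z0 (z0 :: s) j) = (i != j).
  have [<-|ij] := eqVneq i j; first by rewrite e_irr.
  by apply: s_clique; rewrite ?mem_nth ?s_size // nth_uniq ?s_size.
exists (fun i : 'I_4 => nth z0 (z0 :: s) i); split; last exact: s_adj.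
apply: inj_card_bij; first exact: nth_ord_inj.
rewrite card_ord -s_size; apply: leq_trans (card_size _).
by apply/subset_leq_card/subsetP => y _.
Qed.

End Subcubic.

Lemma key_marked_copy (K : eqType) (key : T -> K) h (k : K) n (adj : rel 'I_n)
    (mk : pred 'I_n) (phi : 'I_n -> T) M :
  (forall x y, h x y = e x y && (key x == key y)) ->
  injective phi -> (forall i, key (phi i) = k) ->
  (forall z, key z = k -> z \in codom phi) ->
  (forall i j, e (phi i) (phi j) = adj i j) -> (forall i, (phi i \in M) = mk i) ->
  (forall i j, connect adj i j) ->
  forall x, x \in codom phi -> marked_copy adj mk h M [set y | connect h x y].
Proof.
move=> hE phi_inj keyphi keyinv ephi mphi adj_conn x /codomP[i ->].
exists phi; split => //; last by move=> i' j'; rewrite hE ephi !keyphi eqxx andbT.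
apply/setP => y; rewrite inE; apply/idP/imsetP => [ixy | [j _ ->]].
  have closedk : closed h [pred z | key z == k].
    by move=> u v; rewrite hE => /andP[_ /eqP kuv]; rewrite !inE kuv.
  have := closed_connect closedk ixy; rewrite !inE keyphi eqxx.
  by move=> /esym/eqP/keyinv/codomP[j ->]; exists j.
apply: connect_image (adj_conn i j) => i' j' aij.
by rewrite hE ephi aij !keyphi eqxx.
Qed.

End Graph.

Ltac distinct := rewrite /= ?inE ?negb_or ?andbT;
  repeat (apply/andP; split); by [| rewrite eq_sym].

Section Mate.
Variable T : finType.
Variable e : rel T.
Hypothesis e_sym : symmetric e.
Hypothesis e_irr : irreflexive e.
Variable D : {set T}.
Hypothesis D_diss : dissociation e D.

(* on D, [mate u = u] exactly when u is isolated in G[D] *)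
Definition mate u := odflt u [pick v in D | e u v].

Lemma mateP u : u \in D ->
  mate u = u \/ [/\ mate u \in D, e u (mate u), mate u != u & mate (mate u) = u].
Proof.
move=> uD; rewrite /mate; case: pickP => [v /andP[vD euv] | _] /=; last by left.
right; have vu : v != u by apply: contraTneq euv => ->; rewrite e_irr.
split => //; case: pickP => [w /andP[wD evw] | none] /=.
  by apply: (dissociation_nbr_uniq D_diss vD wD uD evw); rewrite e_sym.
by move: (none u); rewrite uD e_sym euv.
Qed.

Lemma mate_of_adj u v : u \in D -> v \in D -> e u v -> mate u = v.
Proof.
move=> uD vD euv; rewrite /mate; case: pickP => [w /andP[wD euw] | none] /=.
  exact: (dissociation_nbr_uniq D_diss uD wD vD euw euv).
by move: (none v); rewrite vD euv.
Qed.

Lemma mate_in u : u \in D -> mate u \in D.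
Proof. by move=> uD; case: (mateP uD) => [->|[]]. Qed.

Definition dominated (X : {set T}) u := [exists x in X, e x u].

Section Exchange.
Variables X Z : {set T}.
Hypothesis X_indep : independent e X.
Hypothesis X_out : [disjoint X & D].
Hypothesis Z_sub : Z \subset D.
Hypothesis Z_closed : forall u, u \in Z -> mate u \in Z.
Hypothesis no_dominated_pair : forall u, u \in D -> u \notin Z ->
  dominated X u -> dominated X (mate u) -> False.

(* From every edge of G[D - Z] pick an end not dominated by X (the one of lower
   rank if neither end is dominated), and add the isolated vertices of G[D - Z];
   together with X this is an independent set. *)
Definition exchange_set := [set u in D | [&& u \notin Z, ~~ dominated X u &
  [|| dominated X (mate u), mate u == u | enum_rank u < enum_rank (mate u)]]].

Lemma exchange_set_indep : independent e (X :|: exchange_set).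
Proof.
have notdom x u : x \in X -> u \in exchange_set -> ~~ e x u.
  move=> xX; rewrite inE => /and3P[_ _ /andP[/existsPn/(_ x)]].
  by rewrite xX.
apply/independentP => x y; rewrite !inE => /orP[xX|xS] /orP[yX|yS].
- by move/independentP: X_indep; apply.
- by apply: notdom; rewrite ?inE.
- by rewrite e_sym; apply: notdom; rewrite ?inE.
apply/negP => exy.
move: xS yS => /andP[xD /and3P[_ nx cx]] /andP[yD /and3P[_ ny cy]].
have xy : x != y by apply: contraTneq exy => ->; rewrite e_irr.
move: cx cy; rewrite (mate_of_adj xD yD exy) (@mate_of_adj y x) // 1?e_sym //.
by rewrite (negbTE ny) (negbTE nx) (negbTE xy) eq_sym (negbTE xy) /= => r1 r2; lia.
Qed.

Lemma exchange_set_lone u : u \in D :\: Z -> mate u = u -> u \in exchange_set.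
Proof.
rewrite inE => /andP[uZ uD] mu; rewrite inE uD uZ mu eqxx !orbT andbT /=.
by apply/negP => du; apply: (no_dominated_pair uD uZ du); rewrite mu.
Qed.

Lemma exchange_set_cover : D :\: Z \subset exchange_set :|: mate @: exchange_set.
Proof.
apply/subsetP => u uDZ; have := uDZ; rewrite in_setD in_setU => /andP[uZ uD].
case: (mateP uD) => [mu | [muD eumu mun mmu]].
  by rewrite exchange_set_lone.
have muZ : mate u \notin Z by apply: contra uZ => /Z_closed; rewrite mmu.
have inS v : v \in D -> v \notin Z -> ~~ dominated X v ->
    [|| dominated X (mate v), mate v == v | enum_rank v < enum_rank (mate v)] ->
    v \in exchange_set.
  by move=> *; rewrite inE; apply/and4P.
have inmS : mate u \in exchange_set -> u \in mate @: exchange_set.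
  by move=> muS; apply/imsetP; exists (mate u).
case du : (dominated X u); case dmu : (dominated X (mate u)).
- by case: (no_dominated_pair uD uZ du dmu).
- by rewrite inmS ?orbT // inS // ?dmu // mmu du.
- by rewrite inS ?dmu ?du.
have ranks : enum_rank u != enum_rank (mate u).
  by rewrite (inj_eq enum_rank_inj) eq_sym.
case: (ltngtP (enum_rank u) (enum_rank (mate u))) => [lt | gt | eq].
- by rewrite inS ?du ?lt ?orbT.
- by rewrite inmS ?orbT // inS // ?dmu // mmu gt !orbT.
- by move/eqP: ranks; case; apply: val_inj.
Qed.

Lemma exchange_bound :
  2 * #|X| + #|D| + [exists u in D :\: Z, mate u == u] <= #|Z| + 2 * alpha e.
Proof.
have cXS : #|X :|: exchange_set| = #|X| + #|exchange_set|.
  rewrite cardsU; suff -> : X :&: exchange_set = set0 by rewrite cards0 subn0.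
  apply/setP => x; rewrite !inE; apply/negP => /andP[xX /andP[xD _]].
  by move: X_out => /disjoint_setI0 /setP /(_ x); rewrite !inE xX xD.
have aXS := leq_card_alpha exchange_set_indep.
have cD : #|D :\: Z| = #|D| - #|Z| by rewrite cardsD (setIidPr Z_sub).
have cZD : #|Z| <= #|D| by apply: subset_leq_card.
have := subset_leq_card exchange_set_cover; rewrite cardsU => cover.
have cmS : #|mate @: exchange_set| <= #|exchange_set| := leq_imset_card _ _.
have cSmS : #|exchange_set :&: mate @: exchange_set| <= #|mate @: exchange_set|.
  by apply/subset_leq_card/subsetIr.
have lone : [exists u in D :\: Z, mate u == u] ->
    0 < #|exchange_set :&: mate @: exchange_set|.
  case/exists_inP => u uDZ /eqP mu; apply/card_gt0P; exists u.
  by rewrite inE exchange_set_lone //; apply/imsetP; exists u; rewrite ?exchange_set_lone.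
by case: [exists u in _, _] lone => /= [/(_ isT)|_]; lia.
Qed.

End Exchange.

Lemma card_dissociation_bound :
  #|D| + [exists u in D, mate u == u] <= 2 * alpha e.
Proof.
have := @exchange_bound set0 set0; rewrite setD0 !cards0 muln0 add0n.
apply.
- by apply/independentP => x y; rewrite inE.
- by rewrite -setI_eq0 set0I.
- exact: sub0set.
- by move=> v; rewrite inE.
- by move=> v _ _ /existsP[x]; rewrite inE.
Qed.

Section Extremal.
Hypothesis e_cub : subcubic e.
Hypothesis D_large : 2 * alpha e <= #|D|.

Lemma mate_perfect u : u \in D ->
  [/\ mate u \in D, e u (mate u), mate u != u & mate (mate u) = u].
Proof.
move=> uD; case: (mateP uD) => // mu.
have lone : [exists v in D, mate v == v] by apply/exists_inP; exists u; rewrite ?mu.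
by have := card_dissociation_bound; rewrite lone addn1 ltnNge D_large.
Qed.

Lemma mateK u : u \in D -> mate (mate u) = u. Proof. by case/mate_perfect. Qed.
Lemma mate_adj u : u \in D -> e u (mate u). Proof. by case/mate_perfect. Qed.
Lemma mate_neq u : u \in D -> mate u != u. Proof. by case/mate_perfect. Qed.

Lemma mate_eq_mate u v : u \in D -> v \in D -> (mate u == mate v) = (u == v).
Proof.
move=> uD vD; apply/eqP/eqP => [muv|-> //].
by rewrite -(mateK uD) muv mateK.
Qed.

Lemma mate_eqC u v : u \in D -> v \in D -> (mate v == u) = (v == mate u).
Proof. by move=> uD vD; rewrite -(mate_eq_mate vD (mate_in uD)) mateK. Qed.

Lemma out_in_neq a u : a \notin D -> u \in D -> a != u.
Proof. by move=> aD uD; apply: contraNneq aD => ->. Qed.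

Lemma exchange_pair (sx sz : seq T) :
  uniq sx -> all [predC D] sx -> {in sx &, forall x y, ~~ e x y} ->
  all [in D] sz -> {in sz, forall u, mate u \in sz} -> size sz < 2 * size sx ->
  exists u, [/\ u \in D, u \notin sz, has (e^~ u) sx & has (e^~ (mate u)) sx].
Proof.
move=> sx_uniq sx_out sx_indep sz_in sz_closed small.
case: (boolP [exists u, [&& u \in D, u \notin sz, has (e^~ u) sx & has (e^~ (mate u)) sx]]).
  by case/existsP => u /and4P[*]; exists u.
move/existsPn => none; exfalso.
have := @exchange_bound [set x in sx] [set z in sz].
rewrite cardsE (card_uniqP sx_uniq) => /(_ _ _ _ _ _)/(leq_trans (leq_addr _ _)) bound.
have sz_card : #|[set z in sz]| <= size sz by rewrite cardsE card_size.
suff : 2 * size sx + #|D| <= #|[set z in sz]| + 2 * alpha e by lia.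
apply: bound.
- by apply/independentP => x y; rewrite !inE; apply: sx_indep.
- rewrite -setI_eq0; apply/eqP/setP => x; rewrite !inE; apply/negP => /andP[xs xD].
  by move/allP: sx_out => /(_ x xs); rewrite inE xD.
- by apply/subsetP => z; rewrite inE => /(allP sz_in).
- by move=> u; rewrite !inE; apply: sz_closed.
move=> u uD; rewrite inE => uz /exists_inP[x + exu] /exists_inP[y + eymu].
rewrite !inE => xs ys; move: (none u); rewrite uD uz /= negb_and.
by case/orP => /hasPn nbr; [move: (nbr x xs) | move: (nbr y ys)]; rewrite ?exu ?eymu.
Qed.

Lemma apex_exists w : w \notin D -> exists2 u, u \in D & e w u && e w (mate u).
Proof.
move=> wD; have [] := @exchange_pair [:: w] [::] => //=.
- by rewrite wD.
- by move=> x y; rewrite !inE => /eqP-> /eqP->; rewrite e_irr.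
by move=> u [uD _]; rewrite !orbF => ewu ewmu; exists u; rewrite ?ewu.
Qed.

Lemma nbrs_not_in_pairs (sx sz : seq T) :
  uniq sx -> all [predC D] sx -> all [in D] sz ->
  {in sz, forall u, mate u \in sz} -> size sz < 2 * size sx ->
  (forall x z, x \in sx -> e x z -> z \in sz) -> False.
Proof.
move=> sx_uniq sx_out sz_in sz_closed small nbrs.
have [|u [uD uz /hasP[x xs exu] _]] := exchange_pair sx_uniq sx_out _ sz_in sz_closed small.
  move=> x y xs ys; apply/negP => /(nbrs x y xs).
  by move/(allP sz_in); move/allP: sx_out => /(_ y ys); rewrite !inE => /negbTE->.
by move: uz; rewrite (nbrs x u xs exu).
Qed.

Lemma second_shared_pair a b u :
  a \notin D -> b \notin D -> a != b -> ~~ e a b -> u \in D ->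
  e a u -> e a (mate u) -> e b u -> e b (mate u) ->
  exists x, [/\ x \in D, e a x, e b (mate x), x != u & x != mate u].
Proof.
move=> aD bD ab nab uD eau eamu ebu ebmu.
have muD := mate_in uD; have umu := mate_neq uD.
have [] := @exchange_pair [:: a; b] [:: u; mate u].
- by rewrite /= inE ab.
- by rewrite /= aD bD.
- move=> x y; rewrite !inE => /orP[]/eqP-> /orP[]/eqP->; by rewrite ?e_irr // e_sym.
- by rewrite /= uD muD.
- by move=> w; rewrite !inE => /orP[]/eqP->; rewrite ?mateK ?eqxx ?orbT.
- by [].
move=> v [vD]; rewrite !inE negb_or => /andP[vu vmu] /=; rewrite !orbF.
have mvu : mate v != u by rewrite mate_eqC.
have mvmu : mate v != mate u by rewrite mate_eq_mate.
have vmv := mate_neq vD.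
have uniq4 : uniq [:: u; mate u; v; mate v] by distinct.
case/orP => ev; case/orP => emv.
- by case: (no_four_nbrs e_cub eau eamu ev emv uniq4).
- by exists v.
- by exists (mate v); rewrite mateK ?mate_in.
- by case: (no_four_nbrs e_cub ebu ebmu ev emv uniq4).
Qed.

(* a, b, c, d, x, y play the roles of the vertices 0, ..., 5 of K4s_adj *)
Record K4s_config (a b c d x y : T) : Prop := K4sConfig {
  cfg_a_out : a \notin D; cfg_b_out : b \notin D; cfg_c_in : c \in D; cfg_x_in : x \in D;
  cfg_not_ab : ~~ e a b; cfg_mate_c : mate c = d; cfg_mate_x : mate x = y;
  cfg_a_neq_b : a != b; cfg_x_neq_c : x != c; cfg_x_neq_d : x != d;
  cfg_ac : e a c; cfg_ad : e a d; cfg_bc : e b c; cfg_bd : e b d;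
  cfg_ax : e a x; cfg_by : e b y }.

Section Config.
Variables a b c d x y : T.
Hypothesis K : K4s_config a b c d x y.

Lemma cfg_d_in : d \in D. Proof. by rewrite -(cfg_mate_c K) mate_in ?(cfg_c_in K). Qed.
Lemma cfg_y_in : y \in D. Proof. by rewrite -(cfg_mate_x K) mate_in ?(cfg_x_in K). Qed.
Lemma cfg_mate_d : mate d = c. Proof. by rewrite -(cfg_mate_c K) mateK ?(cfg_c_in K). Qed.
Lemma cfg_mate_y : mate y = x. Proof. by rewrite -(cfg_mate_x K) mateK ?(cfg_x_in K). Qed.
Lemma cfg_cd : e c d. Proof. by rewrite -(cfg_mate_c K) mate_adj ?(cfg_c_in K). Qed.
Lemma cfg_xy : e x y. Proof. by rewrite -(cfg_mate_x K) mate_adj ?(cfg_x_in K). Qed.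
Lemma cfg_c_neq_d : c != d.
Proof. by rewrite -(cfg_mate_c K) eq_sym mate_neq ?(cfg_c_in K). Qed.
Lemma cfg_x_neq_y : x != y.
Proof. by rewrite -(cfg_mate_x K) eq_sym mate_neq ?(cfg_x_in K). Qed.
Lemma cfg_y_neq_c : y != c.
Proof.
rewrite -(cfg_mate_x K) mate_eqC ?(cfg_c_in K) ?(cfg_x_in K) //.
by rewrite (cfg_mate_c K) (cfg_x_neq_d K).
Qed.

Lemma cfg_y_neq_d : y != d.
Proof.
rewrite -(cfg_mate_x K) -(cfg_mate_c K) mate_eq_mate ?(cfg_c_in K) ?(cfg_x_in K) //.
exact: cfg_x_neq_c K.
Qed.

Lemma cfg_nbr_a z : e a z -> [|| z == c, z == d | z == x].
Proof.
apply: three_nbrs; rewrite ?(cfg_ac K) ?(cfg_ad K) ?(cfg_ax K) //.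
have := cfg_c_neq_d; have := cfg_x_neq_c K; have := cfg_x_neq_d K; move=> *; distinct.
Qed.

Lemma cfg_nbr_c z : e c z -> [|| z == d, z == a | z == b].
Proof.
move=> ecz; apply: (three_nbrs e_cub cfg_cd _ _ _ ecz);
  rewrite ?(e_sym c) ?(cfg_ac K) ?(cfg_bc K) //.
have := out_in_neq (cfg_a_out K) cfg_d_in; have := out_in_neq (cfg_b_out K) cfg_d_in.
have := cfg_a_neq_b K; move=> *; distinct.
Qed.

Lemma cfg_not_ay : ~~ e a y.
Proof.
apply/negP => /cfg_nbr_a; have := cfg_y_neq_c; have := cfg_y_neq_d; have := cfg_x_neq_y.
by rewrite !(eq_sym y) => /negbTE-> /negbTE-> /negbTE->.
Qed.

Lemma cfg_not_cx : ~~ e c x.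
Proof.
apply/negP => /cfg_nbr_c; have := out_in_neq (cfg_a_out K) (cfg_x_in K).
have := out_in_neq (cfg_b_out K) (cfg_x_in K); have := cfg_x_neq_d K.
by rewrite !(eq_sym x) => /negbTE-> /negbTE-> /negbTE->.
Qed.

Lemma cfg_not_cy : ~~ e c y.
Proof.
apply/negP => /cfg_nbr_c; have := out_in_neq (cfg_a_out K) cfg_y_in.
have := out_in_neq (cfg_b_out K) cfg_y_in; have := cfg_y_neq_d.
by rewrite !(eq_sym y) => /negbTE-> /negbTE-> /negbTE->.
Qed.

Lemma cfg_swap_ab : K4s_config b a c d y x.
Proof.
case: K => *; split; rewrite ?cfg_y_in ?cfg_mate_y ?cfg_y_neq_c ?cfg_y_neq_d //.
all: by rewrite 1?e_sym // eq_sym.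
Qed.

Lemma cfg_swap_cd : K4s_config a b d c x y.
Proof. by case: K => *; split; rewrite ?cfg_d_in ?cfg_mate_d // eq_sym. Qed.

Lemma cfg_uniq : uniq [:: a; b; c; d; x; y].
Proof.
have aD := cfg_a_out K; have bD := cfg_b_out K; have cD := cfg_c_in K.
have dD := cfg_d_in; have xD := cfg_x_in K; have yD := cfg_y_in.
have := cfg_a_neq_b K; have := cfg_c_neq_d; have := cfg_x_neq_c K; have := cfg_x_neq_d K.
have := cfg_y_neq_c; have := cfg_y_neq_d; have := cfg_x_neq_y.
have := out_in_neq aD cD; have := out_in_neq aD dD; have := out_in_neq aD xD.
have := out_in_neq aD yD; have := out_in_neq bD cD; have := out_in_neq bD dD.
have := out_in_neq bD xD; have := out_in_neq bD yD.
move=> *; distinct.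
Qed.

Lemma cfg_nbr_a_in z : e a z -> z \in D.
Proof.
by move=> /cfg_nbr_a /or3P[]/eqP->; rewrite ?(cfg_c_in K) ?cfg_d_in ?(cfg_x_in K).
Qed.

Lemma cfg_nbr_c_out z : e c z -> z \notin D -> (z == a) || (z == b).
Proof.
by move=> /cfg_nbr_c /or3P[]/eqP->; rewrite ?cfg_d_in ?eqxx ?orbT.
Qed.

End Config.

Lemma cfg_no_apex a b c d x y w : K4s_config a b c d x y ->
  w \notin D -> e w x -> e w y -> False.
Proof.
move=> K wD ewx ewy; have Kb := cfg_swap_ab K.
have nbr_ab z v : z \in [:: a; b] -> e z v -> v \in [:: c; d; x; y].
  rewrite !inE => /orP[]/eqP-> => [/(cfg_nbr_a K)|/(cfg_nbr_a Kb)];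
  by case/or3P => ->; rewrite ?orbT.
have [] := @exchange_pair [:: a; b; w] [:: c; d; x; y].
- have aw : a != w by apply: contraTneq ewy => <-; rewrite (cfg_not_ay K).
  have bw : b != w by apply: contraTneq ewx => <-; rewrite (cfg_not_ay Kb).
  by rewrite /= !inE negb_or (cfg_a_neq_b K) aw bw.
- by rewrite /= (cfg_a_out K) (cfg_b_out K) wD.
- have nab := cfg_not_ab K.
  have naw : ~~ e a w by apply: contraNN wD => /(cfg_nbr_a_in K).
  have nbw : ~~ e b w by apply: contraNN wD => /(cfg_nbr_a_in Kb).
  by move=> u v; rewrite !inE => /or3P[]/eqP-> /or3P[]/eqP->; rewrite ?e_irr // e_sym.
- by rewrite /= (cfg_c_in K) (cfg_d_in K) (cfg_x_in K) (cfg_y_in K).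
- move=> u; rewrite !inE => /or4P[]/eqP->;
  by rewrite ?(cfg_mate_c K) ?(cfg_mate_d K) ?(cfg_mate_x K) ?(cfg_mate_y K) ?eqxx ?orbT.
- by [].
move=> v [vD vs]; have mvs : mate v \notin [:: c; d; x; y].
  move: vs; rewrite !inE; apply: contra => /or4P[]/eqP/(congr1 mate); rewrite mateK // => ->;
  by rewrite ?(cfg_mate_c K) ?(cfg_mate_d K) ?(cfg_mate_x K) ?(cfg_mate_y K) eqxx ?orbT.
have only_w z : z \notin [:: c; d; x; y] -> has (e^~ z) [:: a; b; w] -> e w z.
  move=> zs /=; rewrite orbF => /or3P[] // ez; case/negP: zs; apply: nbr_ab ez;
  by rewrite !inE eqxx ?orbT.
move=> /(only_w _ vs) ewv /(only_w _ mvs) ewmv.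
apply: (no_four_nbrs e_cub ewx ewy ewv ewmv).
move: vs mvs; rewrite !inE !negb_or => /and4P[_ _ vx vy] /and4P[_ _ mvx mvy].
have := cfg_x_neq_y K; have := mate_neq vD; move=> *; distinct.
Qed.

Definition twin a := (a \notin D) && [exists b, [&& b \notin D, b != a &
  [exists u, [&& u \in D, e a u, e a (mate u), e b u & e b (mate u)]]]].

Definition claims a v := [&& twin a, e a v, v \in D & ~~ e a (mate v)].

Definition apex_pairs w := [set u in D | e w u && e w (mate u)].

(* Every vertex is labelled by the pair of D at the centre of its copy: a vertex
   outside D by the pair it is an apex of, a subdivision vertex of a copy of K4s
   (a vertex of D claimed by a twin) by the pair of its claimer, any other vertex
   of D by its own pair. *)
Definition block v :=
  if v \in D then if [pick a | claims a v] is Some a then apex_pairs a else [set v; mate v]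
  else apex_pairs v.

Definition block_rel := [rel x y | e x y && (block x == block y)].

Lemma apex_pairs_eq w u : u \in D -> e w u -> e w (mate u) ->
  apex_pairs w = [set u; mate u].
Proof.
move=> uD ewu ewmu; apply/setP => z; rewrite !inE; apply/idP/idP.
  case/andP => zD /andP[ewz ewmz]; apply: contraT; rewrite negb_or => /andP[zu zmu].
  case: (no_four_nbrs e_cub ewu ewmu ewz ewmz).
  have := mate_neq uD; have := mate_neq zD.
  have : mate z != u by rewrite mate_eqC.
  have : mate z != mate u by rewrite mate_eq_mate.
  move=> *; distinct.
by case/orP => /eqP->; rewrite ?mateK ?mate_in ?uD ?ewu ?ewmu.
Qed.

Lemma twinI a b u : a \notin D -> b \notin D -> b != a -> u \in D ->
  e a u -> e a (mate u) -> e b u -> e b (mate u) -> twin a.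
Proof.
move=> aD bD ba uD eau eamu ebu ebmu; rewrite /twin aD /=.
by apply/existsP; exists b; rewrite bD ba /=; apply/existsP; exists u; apply/and5P.
Qed.

Lemma cfg_claims a b c d x y : K4s_config a b c d x y -> claims a x.
Proof.
move=> K; rewrite /claims (cfg_ax K) (cfg_x_in K) (cfg_mate_x K) (cfg_not_ay K) !andbT.
apply: (twinI (cfg_a_out K) (cfg_b_out K) _ (cfg_c_in K)); rewrite ?(cfg_mate_c K);
  by case: K => *; rewrite // eq_sym.
Qed.

Lemma cfg_apex_pairs a b c d x y : K4s_config a b c d x y -> apex_pairs a = [set c; d].
Proof.
move=> K; rewrite (@apex_pairs_eq a c) ?(cfg_mate_c K) //; by case: K.
Qed.

Lemma cfg_block_a a b c d x y : K4s_config a b c d x y -> block a = [set c; d].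
Proof. by move=> K; rewrite /block (negbTE (cfg_a_out K)) (cfg_apex_pairs K). Qed.

Lemma cfg_block_c a b c d x y : K4s_config a b c d x y -> block c = [set c; d].
Proof.
move=> K; rewrite /block (cfg_c_in K); case: pickP => [a' | _]; last by rewrite (cfg_mate_c K).
case/and4P => /andP[a'D _] ea'c _; rewrite (cfg_mate_c K) => na'd.
have eca' : e c a' by rewrite e_sym.
case/orP: (cfg_nbr_c_out K eca' a'D) => /eqP ea'.
  by move: na'd; rewrite ea' (cfg_ad K).
by move: na'd; rewrite ea' (cfg_bd K).
Qed.

Section NoAdjacentTwins.
Hypothesis no_adjacent_twins : forall a b u, a \notin D -> b \notin D -> a != b -> u \in D ->
  e a u -> e a (mate u) -> e b u -> e b (mate u) -> ~~ e a b.

Lemma twin_config a : twin a -> exists b u x, K4s_config a b u (mate u) x (mate x).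
Proof.
case/andP => aD /existsP[b /and3P[bD ba /existsP[u /and5P[uD eau eamu ebu ebmu]]]].
have ab : a != b by rewrite eq_sym.
have nab := no_adjacent_twins aD bD ab uD eau eamu ebu ebmu.
have [x [xD eax ebmx xu xmu]] := second_shared_pair aD bD ab nab uD eau eamu ebu ebmu.
by exists b, u, x; split.
Qed.

Lemma claims_config a v : claims a v -> exists b c d, K4s_config a b c d v (mate v).
Proof.
case/and4P => tw eav vD namv; have [b [u [x K]]] := twin_config tw.
case/or3P: (cfg_nbr_a K eav) => /eqP vx.
- by move: namv; rewrite vx (cfg_ad K).
- by move: namv; rewrite vx mateK ?(cfg_ac K) ?(cfg_c_in K).
- by exists b, u, (mate u); rewrite vx.
Qed.

Lemma cfg_claimer_unique a b c d x y a' : K4s_config a b c d x y -> claims a' x -> a' = a.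
Proof.
move=> K cl; have [b' [c' [d' K']]] := claims_config cl.
rewrite (cfg_mate_x K) in K'; have Kb := cfg_swap_ab K; have K'b := cfg_swap_ab K'.
apply/eqP/negPn/negP => a'a.
have b'b : b' != b.
  apply/negP => /eqP eb; have a'b : a' != b by rewrite -eb (cfg_a_neq_b K').
  have a'_ab : ~~ ((a' == a) || (a' == b)) by rewrite negb_or a'a a'b.
  have ec'a' : e c' a' by rewrite e_sym (cfg_ac K').
  have := cfg_bc K'; rewrite eb => /(cfg_nbr_a Kb) /or3P[]/eqP ec'.
  - by case/negP: a'_ab; apply: (cfg_nbr_c_out K) (cfg_a_out K'); rewrite -ec'.
  - by case/negP: a'_ab; apply: (cfg_nbr_c_out (cfg_swap_cd K)) (cfg_a_out K'); rewrite -ec'.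
  - by move: (cfg_x_neq_d K'); rewrite -(cfg_mate_c K') ec' (cfg_mate_y K) eqxx.
have ab' : a != b' by apply: contraTneq (cfg_by K') => <-; rewrite (cfg_not_ay K).
have ba' : b != a' by apply: contraTneq (cfg_ax K') => <-; rewrite (cfg_not_ay Kb).
apply: (@nbrs_not_in_pairs [:: a; b; a'; b'] [:: c; d; x; y; c'; d']).
- by have := cfg_a_neq_b K; have := cfg_a_neq_b K'; move=> *; distinct.
- by rewrite /= (cfg_a_out K) (cfg_b_out K) (cfg_a_out K') (cfg_b_out K').
- by rewrite /= (cfg_c_in K) (cfg_d_in K) (cfg_x_in K) (cfg_y_in K) (cfg_c_in K') (cfg_d_in K').
- move=> u; rewrite !inE => /or4P[| | | /orP[| /orP[|]]] /eqP->;
  by rewrite ?(cfg_mate_c K) ?(cfg_mate_d K) ?(cfg_mate_x K) ?(cfg_mate_y K)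
    ?(cfg_mate_c K') ?(cfg_mate_d K') ?eqxx ?orbT.
- by [].
move=> v z; rewrite !inE => /or4P[]/eqP-> ez.
- by move: (cfg_nbr_a K ez) => /or3P[]/eqP->; rewrite ?eqxx ?orbT.
- by move: (cfg_nbr_a Kb ez) => /or3P[]/eqP->; rewrite ?eqxx ?orbT.
- by move: (cfg_nbr_a K' ez) => /or3P[]/eqP->; rewrite ?eqxx ?orbT.
- by move: (cfg_nbr_a K'b ez) => /or3P[]/eqP->; rewrite ?eqxx ?orbT.
Qed.

Lemma cfg_block_x a b c d x y : K4s_config a b c d x y -> block x = [set c; d].
Proof.
move=> K; rewrite /block (cfg_x_in K); case: pickP => [a' cl | none].
  by rewrite (cfg_claimer_unique K cl) (cfg_apex_pairs K).
by move: (none a); rewrite (cfg_claims K).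
Qed.

Lemma cfg_block a b c d x y : K4s_config a b c d x y ->
  {in [:: a; b; c; d; x; y], forall v, block v = [set c; d]}.
Proof.
move=> K v; rewrite !inE => /or4P[| | | /orP[| /orP[|]]] /eqP->.
- exact: cfg_block_a K.
- exact: cfg_block_a (cfg_swap_ab K).
- exact: cfg_block_c K.
- by rewrite (cfg_block_c (cfg_swap_cd K)) setUC.
- exact: cfg_block_x K.
- exact: cfg_block_x (cfg_swap_ab K).
Qed.

Lemma cfg_block_inv a b c d x y : K4s_config a b c d x y ->
  forall z, block z = [set c; d] -> z \in [:: a; b; c; d; x; y].
Proof.
move=> K z; have Kb := cfg_swap_ab K.
have apex_ab w : w \notin D -> apex_pairs w = [set c; d] -> (w == a) || (w == b).
  move=> wD Aw; have : c \in apex_pairs w by rewrite Aw !inE eqxx.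
  by rewrite inE => /andP[_ /andP[ewc _]]; apply: (cfg_nbr_c_out K) wD; rewrite e_sym.
rewrite /block; case: ifP => zD; last first.
  by move=> /(apex_ab _ (negbT zD)) /orP[]/eqP->; rewrite !inE eqxx ?orbT.
case: pickP => [a' /and4P[/andP[a'D _] ea'z _ _] /(apex_ab _ a'D) | _ zcd].
  case/orP => /eqP ea'; move: ea'z; rewrite ea'.
    by move=> /(cfg_nbr_a K) /or3P[]/eqP->; rewrite !inE eqxx ?orbT.
  by move=> /(cfg_nbr_a Kb) /or3P[]/eqP->; rewrite !inE eqxx ?orbT.
have : z \in [set c; d] by rewrite -zcd !inE eqxx.
by rewrite !inE => /orP[]/eqP->; rewrite eqxx ?orbT.
Qed.

Lemma cfg_adj a b c d x y : K4s_config a b c d x y -> forall i j : 'I_6,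
  e (nth a [:: a; b; c; d; x; y] i) (nth a [:: a; b; c; d; x; y] j) = K4s_adj i j.
Proof.
move=> K; have Kb := cfg_swap_ab K; have Kcd := cfg_swap_cd K.
suff half (i j : 'I_6) : i <= j ->
    e (nth a [:: a; b; c; d; x; y] i) (nth a [:: a; b; c; d; x; y] j) = K4s_adj i j.
  move=> i j; have [/half //|/ltnW/half] := leqP i j.
  by rewrite e_sym K4s_adj_sym.
have edges := (cfg_ac K, cfg_ad K, cfg_bc K, cfg_bd K, cfg_cd K, cfg_ax K, cfg_xy K, cfg_by K).
have non_edges := (negbTE (cfg_not_ab K), negbTE (cfg_not_ay K), negbTE (cfg_not_ay Kb),
  negbTE (cfg_not_cx K), negbTE (cfg_not_cy K), negbTE (cfg_not_cx Kcd), negbTE (cfg_not_cy Kcd)).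
move: i j; case=> [[|[|[|[|[|[|i]]]]]] ?] //; case=> [[|[|[|[|[|[|j]]]]]] ?] //= _;
  by rewrite ?e_irr ?edges ?non_edges.
Qed.

Lemma cfg_marked_copy a b c d x y : K4s_config a b c d x y ->
  {in [:: a; b; c; d; x; y], forall z,
    marked_copy K4s_adj K4s_mark block_rel D [set v | connect block_rel z v]}.
Proof.
move=> K z zs; set s := [:: a; b; c; d; x; y].
apply: (@key_marked_copy _ _ _ block block_rel [set c; d] 6 _ _ (fun i => nth a s i)).
- by [].
- exact: nth_ord_inj (cfg_uniq K).
- by move=> i; apply: (cfg_block K); rewrite mem_nth.
- by move=> v /(cfg_block_inv K); apply: mem_codom_nth.
- exact: cfg_adj.
- case=> [[|[|[|[|[|[|i]]]]]] ?] //=;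
  by rewrite ?(cfg_c_in K) ?(cfg_d_in K) ?(cfg_x_in K) ?(cfg_y_in K) ?(negbTE (cfg_a_out K))
    ?(negbTE (cfg_b_out K)).
- exact: K4s_connect.
- exact: mem_codom_nth.
Qed.

Section Triangle.
Variables w u : T.
Hypotheses (wD : w \notin D) (uD : u \in D) (ewu : e w u) (ewmu : e w (mate u)).

Lemma triangle_block : {in [:: u; mate u; w], forall z, block z = [set u; mate u]}.
Proof.
move=> z; rewrite !inE => /or3P[]/eqP->; rewrite /block.
- rewrite uD; case: pickP => [a' /claims_config[b [c [d K]]] | //].
  by case: (cfg_no_apex K wD ewu ewmu).
- rewrite mate_in //; case: pickP => [a' /claims_config[b [c [d K]]] | _].
    by case: (cfg_no_apex K wD ewmu); rewrite mateK.
  by rewrite mateK // setUC.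
- by rewrite (negbTE wD); apply: apex_pairs_eq.
Qed.

Lemma triangle_block_inv z : ~~ twin w ->
  block z = [set u; mate u] -> z \in [:: u; mate u; w].
Proof.
move=> ntw; have apex_w v : v \notin D -> u \in apex_pairs v -> v = w.
  rewrite inE => vD /andP[_ /andP[evu evmu]]; apply: contraNeq ntw => vw.
  exact: twinI wD vD vw uD ewu ewmu evu evmu.
rewrite /block; case: ifP => zD; last first.
  move=> Az; have -> : z = w by apply: apex_w; rewrite ?zD // Az !inE eqxx.
  by rewrite !inE eqxx !orbT.
case: pickP => [a' /and4P[tw _ _ _] Aa' | _ zu].
  have a'D : a' \notin D by case/andP: tw.
  by case/negP: ntw; rewrite -(apex_w a' a'D) // Aa' !inE eqxx.
have : z \in [set u; mate u] by rewrite -zu !inE eqxx.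
by rewrite !inE => /orP[]/eqP->; rewrite eqxx ?orbT.
Qed.

Lemma triangle_marked_copy : ~~ twin w ->
  {in [:: u; mate u; w], forall z,
    marked_copy K3_adj K3_mark block_rel D [set v | connect block_rel z v]}.
Proof.
move=> ntw z zs; have muD := mate_in uD.
apply: (@key_marked_copy _ _ _ block block_rel [set u; mate u] 3 _ _
  (fun i => nth u [:: u; mate u; w] i)).
- by [].
- by apply: nth_ord_inj; have := mate_neq uD; have := out_in_neq wD uD;
  have := out_in_neq wD muD; move=> *; distinct.
- by move=> i; apply: triangle_block; rewrite mem_nth.
- by move=> v /(triangle_block_inv ntw); apply: mem_codom_nth.
- have eumu := mate_adj uD.
  case=> [[|[|[|i]]] ?] //; case=> [[|[|[|j]]] ?] //=;
  by rewrite ?e_irr // e_sym.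
- by case=> [[|[|[|i]]] ?] //=; rewrite ?uD ?muD ?(negbTE wD).
- exact: complete_connect.
- exact: mem_codom_nth.
Qed.

End Triangle.

Section Edge.
Variable u : T.
Hypothesis uD : u \in D.
Hypothesis no_apex : forall w, w \notin D -> e w u -> e w (mate u) -> False.
Hypothesis unclaimed : forall a, ~~ claims a u.

Lemma edge_block : {in [:: u; mate u], forall z, block z = [set u; mate u]}.
Proof.
move=> z; rewrite !inE => /orP[]/eqP->; rewrite /block.
- by rewrite uD; case: pickP => [a' cl | //]; case/negP: (unclaimed a').
- rewrite mate_in //; case: pickP => [a' /claims_config[b [c [d K]]] | _].
    by case/negP: (unclaimed b); have := cfg_claims (cfg_swap_ab K); rewrite mateK.
  by rewrite mateK // setUC.
Qed.

Lemma edge_block_inv z : block z = [set u; mate u] -> z \in [:: u; mate u].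
Proof.
have not_apex v : v \notin D -> u \notin apex_pairs v.
  by move=> vD; rewrite inE; apply/negP => /andP[_ /andP[evu evmu]]; apply: no_apex vD evu evmu.
rewrite /block; case: ifP => zD.
  case: pickP => [a' /and4P[/andP[a'D _] _ _ _] Aa' | _ zu].
    by case/negP: (not_apex a' a'D); rewrite Aa' !inE eqxx.
  have : z \in [set u; mate u] by rewrite -zu !inE eqxx.
  by rewrite !inE.
by move=> Az; case/negP: (not_apex z (negbT zD)); rewrite Az !inE eqxx.
Qed.

Lemma edge_marked_copy :
  {in [:: u; mate u], forall z,
    marked_copy K2_adj K2_mark block_rel D [set v | connect block_rel z v]}.
Proof.
move=> z zs; have muD := mate_in uD.
apply: (@key_marked_copy _ _ _ block block_rel [set u; mate u] 2 _ _
  (fun i => nth u [:: u; mate u] i)).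
- by [].
- by apply: nth_ord_inj; have := mate_neq uD; move=> *; distinct.
- by move=> i; apply: edge_block; rewrite // mem_nth.
- by move=> v /edge_block_inv; apply: mem_codom_nth.
- have eumu := mate_adj uD.
  by case=> [[|[|i]] ?] //; case=> [[|[|j]] ?] //=; rewrite ?e_irr // e_sym.
- by case=> [[|[|i]] ?] //=; rewrite ?uD ?muD.
- exact: complete_connect.
- exact: mem_codom_nth.
Qed.

End Edge.

Lemma block_mate u : u \in D -> block (mate u) = block u.
Proof.
move=> uD; case: (pickP (claims^~ u)) => [a /claims_config[b [c [d K]]] | unu].
  by rewrite !(cfg_block K) // !inE eqxx ?orbT.
case: (pickP (claims^~ (mate u))) => [a /claims_config[b [c [d K]]] | unmu].
  by rewrite -{2}(mateK uD) !(cfg_block K) // !inE eqxx ?orbT.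
rewrite /block uD mate_in //; case: pickP => [a|_]; first by rewrite unmu.
by case: pickP => [a|_]; [rewrite unu | rewrite mateK // setUC].
Qed.

Lemma block_rel_copy v : let C := [set y | connect block_rel v y] in
  [\/ marked_copy K2_adj K2_mark block_rel D C, marked_copy K3_adj K3_mark block_rel D C
    | marked_copy K4s_adj K4s_mark block_rel D C].
Proof.
have twin_case w : twin w -> (w == v) || e w v ->
    marked_copy K4s_adj K4s_mark block_rel D [set y | connect block_rel v y].
  case/twin_config => b [c [x K]] wv; apply: (cfg_marked_copy K).
  case/orP: wv => [/eqP->|/(cfg_nbr_a K)/or3P[]/eqP->]; by rewrite !inE eqxx ?orbT.
case: (boolP (v \in D)) => vD; last first.
  have [u uD /andP[evu evmu]] := apex_exists vD.
  case: (boolP (twin v)) => tw; first by constructor 3; apply: (twin_case v tw); rewrite eqxx.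
  by constructor 2; apply: triangle_marked_copy vD uD evu evmu tw _ _; rewrite !inE eqxx !orbT.
case: (pickP (claims^~ v)) => [a cl | unclaimed].
  have [b [c [d K]]] := claims_config cl.
  by constructor 3; apply: (cfg_marked_copy K); rewrite !inE eqxx !orbT.
case: (boolP [exists w, [&& w \notin D, e w v & e w (mate v)]]) => [|/existsPn no_apex].
  case/existsP => w /and3P[wD ewv ewmv].
  case: (boolP (twin w)) => tw; first by constructor 3; apply: (twin_case w tw); rewrite ewv orbT.
  by constructor 2; apply: triangle_marked_copy wD vD ewv ewmv tw _ _; rewrite !inE eqxx.
constructor 1; apply: edge_marked_copy vD _ _ _ _; rewrite ?inE ?eqxx //.
- by move=> w wD ewv ewmv; move: (no_apex w); rewrite wD ewv ewmv.
- by move=> a; rewrite unclaimed.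
Qed.

Lemma built_from_mated_blocks : built_from_copies e.
Proof.
exists block_rel, D; split.
- by move=> x y; rewrite /= e_sym eq_sym.
- by move=> x y /andP[].
- exact: block_rel_copy.
move=> x y exy; apply: contraNN => /andP[xD yD].
by rewrite /block_rel /= exy -(mate_of_adj xD yD exy) (block_mate xD) eqxx.
Qed.

End NoAdjacentTwins.

Lemma adjacent_twins_clique a b u : a \notin D -> b \notin D -> a != b -> u \in D ->
  e a u -> e a (mate u) -> e b u -> e b (mate u) -> e a b ->
  uniq [:: a; b; u; mate u] /\ {in [:: a; b; u; mate u] &, forall p q, p != q -> e p q}.
Proof.
move=> aD bD ab uD eau eamu ebu ebmu eab.
have muD := mate_in uD; have eumu := mate_adj uD; have umu := mate_neq uD.
have [au amu] := (out_in_neq aD uD, out_in_neq aD muD).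
have [bu bmu] := (out_in_neq bD uD, out_in_neq bD muD).
split; first by distinct.
move=> p q; rewrite !inE => /or4P[]/eqP-> /or4P[]/eqP->; rewrite ?eqxx // => _;
by [| rewrite e_sym].
Qed.

End Extremal.

End Mate.

Lemma diss_le_2alpha (T : finType) (e : rel T) :
  symmetric e -> irreflexive e -> diss e <= 2 * alpha e.
Proof.
move=> e_sym e_irr; have [D D_diss <-] := diss_witness e.
by apply: leq_trans (card_dissociation_bound e_sym e_irr D_diss); apply: leq_addr.
Qed.

Section ClassLowerBound.
Variable T : finType.
Variable e : rel T.
Hypothesis e_irr : irreflexive e.

Lemma K4_2alpha_le_diss : isK4 e -> 2 * alpha e <= diss e.
Proof.
case=> phi [[psi phiK psiK] ephi].
have alpha1 : alpha e <= 1.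
  have [I I_indep <-] := alpha_witness e.
  apply: complete_indep_card I_indep => x y.
  by rewrite -(psiK x) -(psiK y) ephi (can_eq phiK).
have := leq_card_diss (dissociation_pair (phi ord0) (phi (lift ord0 ord0)) e_irr).
by rewrite cards2 (can_eq phiK) /=; lia.
Qed.

Lemma built_2alpha_le_diss : built_from_copies e -> 2 * alpha e <= diss e.
Proof.
case=> h [M [h_sym h_sub copies added]].
have h_connect_sym := sym_connect_sym h_sym.
have inner x y : e x y -> x \in M -> y \in M -> h x y.
  by move=> exy xM yM; apply: contraT => /(added _ _ exy); rewrite xM yM.
have M_diss : dissociation e M.
  apply/forall_inP => x xM; apply/card_le1_eqP => y z.
  rewrite !inE => /andP[yM exy] /andP[zM exz].
  have hxy := inner x y exy xM yM; have hxz := inner x z exz xM zM.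
  have comp v : h x v -> v \in [set v | connect h x v] by rewrite inE => /connect1.
  have xC : x \in [set v | connect h x v] by rewrite inE connect0.
  have copy_diss n (adj : rel 'I_n) mk : marks_dissociation adj mk ->
      marked_copy adj mk h M [set v | connect h x v] -> z = y.
    move=> mkD Cx; apply/esym.
    exact: marked_copy_dissociation mkD Cx _ _ _ xC (comp y hxy) (comp z hxz) xM yM zM hxy hxz.
  case: (copies x) => Cx.
  - exact: copy_diss K2_marks_dissociation Cx.
  - exact: copy_diss K3_marks_dissociation Cx.
  - exact: copy_diss K4s_marks_dissociation Cx.
have [I I_indep <-] := alpha_witness e.
suff : 2 * #|I| <= #|M| by move/leq_trans; apply; apply: leq_card_diss.
rewrite (card_connect_partition I h_connect_sym) (card_connect_partition M h_connect_sym).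
rewrite big_distrr /=; apply: leq_sum => r _.
case: (copies r) => Cr; apply: marked_copy_indep h_sub I_indep Cr => J J_indep.
- by rewrite card_K2_mark; apply: leq_mul (leqnn 2) (complete_indep_card _ J_indep).
- by rewrite card_K3_mark; apply: leq_mul (leqnn 2) (complete_indep_card _ J_indep).
- by rewrite card_K4s_mark; apply: leq_mul (leqnn 2) (K4s_indep_card J_indep).
Qed.

End ClassLowerBound.

Lemma classG_of_2alpha_eq_diss (T : finType) (e : rel T) :
  symmetric e -> irreflexive e -> subcubic e -> (forall x y, connect e x y) ->
  2 * alpha e = diss e -> classG e.
Proof.
move=> e_sym e_irr e_cub conn alpha_diss.
have [D D_diss D_card] := diss_witness e.
have D_large : 2 * alpha e <= #|D| by rewrite D_card alpha_diss.
case: (boolP [exists a, exists b, exists u, [&& a \notin D, b \notin D, a != b, u \in D &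
    [&& e a u, e a (mate e D u), e b u, e b (mate e D u) & e a b]]]).
  case/existsP => a /existsP[b /existsP[u /and5P[aD bD ab uD /and5P[eau eamu ebu ebmu eab]]]].
  have [s_uniq s_clique] :=
    adjacent_twins_clique e_sym e_irr D_diss D_large aD bD ab uD eau eamu ebu ebmu eab.
  by left; apply: clique4_isK4 s_uniq s_clique.
move/existsPn => none; right; apply: (built_from_mated_blocks e_sym e_irr D_diss e_cub D_large).
move=> a b u aD bD ab uD eau eamu ebu ebmu; apply/negP => eab.
by move: (none a) => /existsPn/(_ b)/existsPn/(_ u); rewrite aD bD ab uD eau eamu ebu ebmu eab.
Qed.

Theorem theorem3 (T : finType) (e : rel T) :
  simple_graph e -> connected_graph e -> subcubic e ->
  (2 * alpha e = diss e <-> classG e).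
Proof.
move=> [e_sym e_irr] [_ conn] e_cub; split; first exact: classG_of_2alpha_eq_diss.
move=> inG; apply/eqP; rewrite eqn_leq diss_le_2alpha // andbT.
by case: inG; [apply: K4_2alpha_le_diss | apply: built_2alpha_le_diss].
Qed.
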